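(* For every $r\ge2$, every eigenvalue $\lambda$ of $M^{(r)}_{++}$, $M^{(r)}_{+-}$ or $M^{(r)}_{--}$, and for every $r\ge0$ every eigenvalue $\lambda$ of $M^{(r)}_{-+}$, satisfies either $\lambda=0$ or $\lambda>\frac32-\sqrt2$ (all these eigenvalues are real).
   Context: Matrices: for $r\ge2$, $M^{(r)}_{++}=M^{(r)}_{+-}$ is the $r\times r$ tridiagonal matrix with first row $(\tfrac12,-1,0,\dots,0)$, rows $i=2,\dots,r-1$ having entries $-\tfrac12,\tfrac32,-1$ in columns $i-1,i,i+1$ (zeros elsewhere), and last row $(0,\dots,0,-1,2)$; $M^{(r)}_{--}$ is identical except that its first row is $(\tfrac32,-1,0,\dots,0)$. $M^{(0)}_{-+}=(1)$, and for $r\ge1$, $M^{(r)}_{-+}$ is the $(r+1)\times(r+1)$ tridiagonal matrix with first row $(1,-2,0,\dots,0)$, rows $i=2,\dots,r$ having entries $-\tfrac12,\tfrac32,-1$ in columns $i-1,i,i+1$, and last row $(0,\dots,0,-1,2)$. For example $M^{(2)}_{++}=\begin{pmatrix}\frac12&-1\\-1&2\end{pmatrix}$, $M^{(2)}_{--}=\begin{pmatrix}\frac32&-1\\-1&2\end{pmatrix}$, $M^{(1)}_{-+}=\begin{pmatrix}1&-2\\-1&2\end{pmatrix}$. *)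

(* Matrices are taken over algC (algebraic complex numbers),
   an algebraically closed field containing all eigenvalues of these rational matrices. *)
From HB Require Import structures.
From mathcomp Require Import all_boot all_order all_algebra all_field.
Set Implicit Arguments. Unset Strict Implicit. Unset Printing Implicit Defensive.
Import Order.TTheory GRing.Theory Num.Theory.
Local Open Scope ring_scope.

(* Row 0 takes precedence over the last row. *)
Definition tri_entry (a0 b0 : algC) (n i j : nat) : algC :=
  if i == 0%N then (if j == 0%N then a0 else if j == 1%N then b0 else 0)
  else if i == n.-1 then (if j == i.-1 then -1 else if j == i then 2 else 0)
  else (if j == i.-1 then - (1/2) else if j == i then 3/2
        else if j == i.+1 then -1 else 0).

(* M^(r)_{++}, meaningful for r >= 2 *)
Definition M_pp (r : nat) : 'M[algC]_r :=
  \matrix_(i < r, j < r) tri_entry (1/2) (-1) r i j.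
Definition M_pm (r : nat) : 'M[algC]_r := M_pp r.
(* M^(r)_{--}, meaningful for r >= 2 *)
Definition M_mm (r : nat) : 'M[algC]_r :=
  \matrix_(i < r, j < r) tri_entry (3/2) (-1) r i j.
(* M^(r)_{-+}, of size r+1; for r = 0 this is the 1x1 matrix (1). *)
Definition M_mp (r : nat) : 'M[algC]_(r.+1) :=
  \matrix_(i < r.+1, j < r.+1) tri_entry 1 (-2) r.+1 i j.

From HB Require Import structures.
From mathcomp Require Import all_boot all_order all_algebra all_field.
From mathcomp Require Import ring zify.
Set Implicit Arguments. Unset Strict Implicit. Unset Printing Implicit Defensive.
Import Order.TTheory GRing.Theory Num.Theory.
Local Open Scope ring_scope.

(* All four matrices are tridiagonal, with middle rows (-1/2, 3/2, -1) and
   last row (-1, 2).  A right eigenvector x of such a matrix is a sequence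
   solving a three-term recurrence with two boundary conditions.

   The core of the proof (Section ChainGap) treats a "chain": a sequence
   y_0, ..., y_(n+1) with first row a y_0 - y_1 = lam y_0 (a >= 3/2), the
   middle rows above and last row -l y_n + e y_(n+1) = lam y_(n+1)
   (0 < l <= 1, e >= 2).  With the weighted quantities
   P_k = 2^k |y_k|^2 and G_k = 2^k conj(y_k) y_(k+1), the recurrence gives
   G_(k+1) = (3/2 - lam) P_(k+1) - conj(G_k) and |G_k|^2 = P_k P_(k+1) / 2.
   Imaginary parts then force lam to be real, and if lam <= 3/2 - sqrt 2
   the invariant sqrt 2 P_k < 2 G_k propagates along the chain and
   contradicts the last row.  M_mm is such a chain directly.  M_pp and M_mp
   have first row (a0, -2 a0): they have the eigenvalue 0 with eigenvector
   (2^-k), and for lam <> 0 the differences u_k = x_k - 2 x_(k+1) form a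
   shorter chain with the same lam (Section Deflation). *)

Definition gapped (l : algC) : Prop :=
  l \is Num.real /\ (l = 0 \/ 3/2 - sqrtC 2 < l).

Definition tri_mx (a0 b0 : algC) (n : nat) : 'M[algC]_n :=
  \matrix_(i < n, j < n) tri_entry a0 b0 n i j.

Lemma sqrt2_gt0 (C : numClosedFieldType) : 0 < sqrtC 2 :> C.
Proof. by rewrite sqrtC_gt0 ltr0n. Qed.

Lemma sqrt2_sq (C : numClosedFieldType) : sqrtC 2 * sqrtC 2 = 2 :> C.
Proof. by rewrite -expr2 sqrtCK. Qed.

(* The gap 3/2 - sqrt 2 lies below 1, which covers the small matrices. *)
Lemma gap_lt1 (C : numClosedFieldType) : 3/2 - sqrtC 2 < 1 :> C.
Proof.
have s_gt1 : 1 < sqrtC 2 :> C.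
  by rewrite -{1}sqrtC1 ltr_sqrtC ?qualifE /= ?ler01 ?ler0n ?ltr1n.
rewrite -subr_gt0 (_ : 1 - (3/2 - sqrtC 2) = (sqrtC 2 - 1) + 1/2); last by field.
by rewrite ltr_wpDr ?divr_ge0 ?ler0n ?ler01 // subr_gt0.
Qed.

Lemma geomean_lt (R : numFieldType) (A B C : R) :
  0 <= A -> A < C -> C * C = A * B -> C < B.
Proof.
move=> A_ge0 AC CC; have C_gt0 := le_lt_trans A_ge0 AC.
have A_gt0 : 0 < A.
  rewrite lt_def A_ge0 andbT; apply/eqP => A0.
  by move: CC; rewrite A0 mul0r => /eqP; rewrite mulf_eq0 orbb gt_eqF.
have -> : B = C * C / A by rewrite CC mulrC mulKf ?gt_eqF.
by rewrite ltr_pdivlMr // ltr_pM2l.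
Qed.

(* Eigenvalues in the sense of row eigenvectors also have column eigenvectors. *)
Lemma eigenvalue_col (F : fieldType) n (M : 'M[F]_n) l : eigenvalue M l ->
  exists2 x : 'cV_n, x != 0 & M *m x = l *: x.
Proof.
move/eigenvalueP=> [v vM v_nz].
have: \det (M - l%:M) == 0.
  by apply/det0P; exists v => //; rewrite mulmxBr vM mul_mx_scalar subrr.
rewrite -det_tr => /det0P [w w_nz].
rewrite linearB /= tr_scalar_mx mulmxBr mul_mx_scalar => /eqP.
rewrite subr_eq0 => /eqP wM; exists w^T; first by rewrite trmx_eq0.
by rewrite -[M]trmxK -trmx_mul wM linearZ.
Qed.

Lemma eigenvalue_1x1 (F : fieldType) (A : 'M[F]_1) l : eigenvalue A l -> l = A 0 0.
Proof.
move/eigenvalueP=> [v vA v_nz].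
have v00 : v 0 0 != 0.
  by apply: contraNneq v_nz => v0; apply/eqP/matrixP=> i j; rewrite !ord1 mxE.
have := congr1 (fun B : 'rV_1 => B 0 0) vA; rewrite !mxE big_ord1 mulrC.
by move/(mulIf v00).
Qed.

Definition tri_sub (n i : nat) : algC :=
  if i == 0%N then 0 else if i == n.-1 then -1 else -(1/2).
Definition tri_diag (a0 : algC) (n i : nat) : algC :=
  if i == 0%N then a0 else if i == n.-1 then 2 else 3/2.
Definition tri_sup (b0 : algC) (n i : nat) : algC :=
  if i == 0%N then b0 else if i == n.-1 then 0 else -1.

Lemma tri_entry_bands a0 b0 n i j : tri_entry a0 b0 n i j =
  (if j.+1 == i then tri_sub n i else 0) + (if j == i then tri_diag a0 n i else 0)
  + (if j == i.+1 then tri_sup b0 n i else 0).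
Proof.
rewrite /tri_entry /tri_sub /tri_diag /tri_sup.
by repeat (case: ifP => /eqP ?; try lia); rewrite ?addr0 ?add0r.
Qed.

Lemma sum_delta n (c : algC) (X : nat -> algC) k :
  (forall j, (n <= j)%N -> X j = 0) ->
  \sum_(j < n) (if (j : nat) == k then c else 0) * X j = c * X k.
Proof.
move=> X_out; rewrite (eq_bigr (fun j : 'I_n => if (j : nat) == k then c * X j else 0)).
  rewrite -big_mkcond (big_ord1_eq _ (fun j => c * X j)).
  by case: ltnP => // /X_out ->; rewrite mulr0.
by move=> j _; case: eqP; rewrite ?mul0r.
Qed.

Definition cV_seq n (x : 'cV[algC]_n) (k : nat) : algC :=
  if insub k is Some j then x j 0 else 0.

Lemma cV_seqE n (x : 'cV[algC]_n) (j : 'I_n) : cV_seq x j = x j 0.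
Proof. by rewrite /cV_seq valK. Qed.

Lemma cV_seq_out n (x : 'cV[algC]_n) k : (n <= k)%N -> cV_seq x k = 0.
Proof. by move=> nk; rewrite /cV_seq insubF // ltnNge nk. Qed.

Lemma tri_mx_eigen_bands a0 b0 n lam : eigenvalue (tri_mx a0 b0 n) lam ->
  exists X : nat -> algC, [/\ exists2 i, (i < n)%N & X i != 0 &
    forall i, (i < n)%N ->
      tri_sub n i * X i.-1 + tri_diag a0 n i * X i + tri_sup b0 n i * X i.+1
      = lam * X i].
Proof.
move/eigenvalue_col=> [x x_nz x_eig]; exists (cV_seq x); split.
  have [j xj] : exists j : 'I_n, x j 0 != 0.
    apply/existsP; apply: contraNT x_nz => /existsPn x0.
    by apply/eqP/matrixP=> j k; rewrite ord1 mxE; apply/eqP/negPn/x0.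
  by exists j; rewrite ?cV_seqE.
move=> i lt_in; have := congr1 (fun A : 'cV_n => A (Ordinal lt_in) 0) x_eig.
rewrite !mxE -(cV_seqE x (Ordinal lt_in)) /= => <-.
under eq_bigr do rewrite mxE tri_entry_bands -cV_seqE !mulrDl.
rewrite !big_split /= !sum_delta //; try exact: cV_seq_out.
case: i {lt_in} => [|i] /=.
  by rewrite big1 ?add0r /tri_sub ?mul0r ?add0r // => j _; rewrite mul0r.
by under eq_bigr do rewrite eqSS; rewrite sum_delta //; exact: cV_seq_out.
Qed.

Lemma tri_mx_eigen_rows a0 b0 m lam : eigenvalue (tri_mx a0 b0 m.+2) lam ->
  exists X : nat -> algC, [/\ exists2 i, (i < m.+2)%N & X i != 0,
    a0 * X 0%N + b0 * X 1%N = lam * X 0%N,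
    forall i, (1 <= i <= m)%N -> -(1/2) * X i.-1 + 3/2 * X i - X i.+1 = lam * X i &
    - X m + 2 * X m.+1 = lam * X m.+1].
Proof.
move/tri_mx_eigen_bands=> [X [X_nz rows]]; exists X; split => //.
- by have := rows 0%N isT; rewrite /tri_sub /tri_diag /tri_sup /= mul0r add0r.
- move=> i /andP[i_ge1 i_le]; have := rows i (leq_trans i_le (leqnSn _)).
  rewrite /tri_sub /tri_diag /tri_sup /=.
  have [-> ->] : (i == 0%N) = false /\ (i == m.+1) = false by split; lia.
  by move=> <-; ring.
- by have := rows m.+1 (leqnn _); rewrite /tri_sub /tri_diag /tri_sup /= eqxx => <-; ring.
Qed.

Section ChainGap.

Variables (a l e lam : algC) (n : nat) (y : nat -> algC).
Hypotheses (a_ge : 3/2 <= a) (l_gt0 : 0 < l) (l_le1 : l <= 1) (e_ge : 2 <= e).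
Hypothesis first_row : a * y 0%N - y 1%N = lam * y 0%N.
Hypothesis mid_rows : forall i, (1 <= i <= n)%N ->
  -(1/2) * y i.-1 + 3/2 * y i - y i.+1 = lam * y i.
Hypothesis last_row : - l * y n + e * y n.+1 = lam * y n.+1.
Hypothesis y_nz : exists2 i, (i < n.+2)%N & y i != 0.

Local Notation s := (sqrtC 2 : algC).

(* Forward form of the recurrence: y_0 determines the whole chain. *)
Lemma chain_first : y 1%N = (a - lam) * y 0%N.
Proof. by rewrite mulrBl -first_row; ring. Qed.

Lemma chain_step i : (1 <= i <= n)%N -> y i.+1 = (3/2 - lam) * y i - 1/2 * y i.-1.
Proof. by move=> /mid_rows rowi; rewrite mulrBl -rowi; ring. Qed.

Lemma chain_head_neq0 : y 0%N != 0.
Proof.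
apply/negP=> /eqP y00; have [i lt_in yi] := y_nz; move: yi.
have zero k : (k <= n)%N -> y k = 0 /\ y k.+1 = 0.
  elim: k => [|k IH] le_kn; first by rewrite chain_first y00 mulr0.
  have [yk yk1] := IH (ltnW le_kn); split => //.
  by rewrite chain_step ?le_kn //= yk yk1 !mulr0 subrr.
case: i lt_in => [|i] lt_in; first by rewrite y00 eqxx.
by rewrite (zero i lt_in).2 eqxx.
Qed.

Definition wnorm k : algC := (2 ^ k)%:R * (y k * (y k)^*).
Definition wcorr k : algC := (2 ^ k)%:R * ((y k)^* * y k.+1).

Lemma wnorm_ge0 k : 0 <= wnorm k.
Proof. by rewrite mulr_ge0 ?ler0n ?mul_conjC_ge0. Qed.

Lemma wnorm0_gt0 : 0 < wnorm 0.
Proof. by rewrite /wnorm expn0 mul1r mul_conjC_gt0 chain_head_neq0. Qed.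

Lemma conj_wnorm k : (wnorm k)^* = wnorm k.
Proof. by rewrite conj_Creal // ger0_real ?wnorm_ge0. Qed.

Lemma conj_wcorr k : (wcorr k)^* = (2 ^ k)%:R * (y k * (y k.+1)^*).
Proof. by rewrite /wcorr !rmorphM /= conjC_nat conjCK. Qed.

Lemma wcorr_norm k : wcorr k * (wcorr k)^* = wnorm k * wnorm k.+1 / 2.
Proof. by rewrite conj_wcorr /wcorr /wnorm expnS natrM; field. Qed.

Lemma wcorr0 : wcorr 0 = (a - lam) * wnorm 0.
Proof. by rewrite /wcorr /wnorm chain_first expn0; ring. Qed.

Lemma wcorrS k : (k < n)%N -> wcorr k.+1 = (3/2 - lam) * wnorm k.+1 - (wcorr k)^*.
Proof.
move=> lt_kn; rewrite conj_wcorr /wcorr /wnorm (chain_step (_ : 1 <= k.+1 <= n)%N) /=.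
  by rewrite expnS natrM; field.
by rewrite lt_kn.
Qed.

Lemma wcorr_last : l * (wcorr n)^* = (e - lam) * wnorm n.+1 / 2.
Proof.
have yn : l * y n = (e - lam) * y n.+1 by rewrite mulrBl -last_row; ring.
have -> : l * (wcorr n)^* = (2 ^ n)%:R * (l * y n) * (y n.+1)^* by rewrite conj_wcorr; ring.
by rewrite yn /wnorm expnS natrM; field.
Qed.

Lemma wcorr_imag j : (j <= n)%N ->
  wcorr j - (wcorr j)^* = (lam^* - lam) * \sum_(k < j.+1) wnorm k.
Proof.
have a_real : a \is Num.real by rewrite ger0_real // (le_trans _ a_ge) ?divr_ge0 ?ler0n.
have conj32 : (3/2 : algC)^* = 3/2 by rewrite conj_Creal // ger0_real ?divr_ge0 ?ler0n.
elim: j => [|j IH] le_jn.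
  by rewrite big_ord1 wcorr0 rmorphM /= rmorphB /= (conj_Creal a_real) conj_wnorm; ring.
rewrite big_ord_recr /= mulrDr -IH ?(ltnW le_jn) // wcorrS //.
move: (wcorr j) (wnorm j.+1) (conj_wnorm j.+1) => G P P_real.
by rewrite !rmorphB /= rmorphM /= rmorphB /= conjCK P_real conj32; ring.
Qed.

Lemma chain_real : lam \is Num.real.
Proof.
have l_real : l \is Num.real := gtr0_real l_gt0.
have e_real : e \is Num.real by rewrite ger0_real // (le_trans _ e_ge) ?ler0n.
have half_real : (2^-1 : algC) \is Num.real by rewrite realV ger0_real ?ler0n.
have last_conj : l * wcorr n = (e - lam^*) * wnorm n.+1 / 2.
  have := congr1 Num.conj wcorr_last.
  move: (wcorr n) (wnorm n.+1) (conj_wnorm n.+1) => G P P_real.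
  rewrite !rmorphM /= rmorphB /= conjCK P_real.
  by rewrite (conj_Creal l_real) (conj_Creal e_real) (conj_Creal half_real).
set S := \sum_(k < n.+1) wnorm k.
have S_gt0 : 0 < S.
  rewrite /S big_ord_recl ltr_wpDr ?wnorm0_gt0 //.
  by apply: sumr_ge0 => k _; exact: wnorm_ge0.
have pos : 0 < l * S + wnorm n.+1 / 2.
  by apply: ltr_wpDr; [rewrite divr_ge0 ?wnorm_ge0 ?ler0n | rewrite mulr_gt0].
have : (lam^* - lam) * (l * S + wnorm n.+1 / 2) = 0.
  have -> : (lam^* - lam) * (l * S + wnorm n.+1 / 2) =
    l * ((lam^* - lam) * S) + (lam^* - lam) * wnorm n.+1 / 2 by ring.
  by rewrite -wcorr_imag // mulrBr last_conj wcorr_last; ring.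
move/eqP; rewrite mulf_eq0 (gt_eqF pos) orbF.
by rewrite subr_eq0 => /eqP /CrealP.
Qed.

Lemma conj_wcorr_real j : (j <= n)%N -> (wcorr j)^* = wcorr j.
Proof.
move=> /wcorr_imag; rewrite (conj_Creal chain_real) subrr mul0r.
by move/eqP; rewrite subr_eq0 => /eqP.
Qed.

(* sqrt 2 P_j < 2 G_j implies 2 G_j < sqrt 2 P_(j+1), since 2 G_j is the
   geometric mean of these two quantities. *)
Lemma wcorr_flip j : (j <= n)%N ->
  s * wnorm j < 2 * wcorr j -> 2 * wcorr j < s * wnorm j.+1.
Proof.
move=> le_jn lower; apply: (geomean_lt _ lower).
  by rewrite mulr_ge0 ?wnorm_ge0 ?sqrtC_ge0 ?ler0n.
have -> : 2 * wcorr j * (2 * wcorr j) = 4 * (wcorr j * (wcorr j)^*).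
  by rewrite conj_wcorr_real //; ring.
rewrite wcorr_norm (_ : s * wnorm j * (s * wnorm j.+1) = (s * s) * (wnorm j * wnorm j.+1)).
  by rewrite sqrt2_sq; field.
by ring.
Qed.

Section BelowGap.

Hypothesis lam_le : lam <= 3/2 - s.

Lemma gap_le_diff : s <= 3/2 - lam.
Proof. by rewrite lerBrDl addrC -lerBrDl. Qed.

Lemma wcorr_lower j : (j <= n)%N -> s * wnorm j < 2 * wcorr j.
Proof.
elim: j => [|j IH] le_jn.
  rewrite wcorr0 mulrA ltr_pM2r ?wnorm0_gt0 //.
  have s_le : s <= a - lam by rewrite (le_trans gap_le_diff) // lerD2r.
  rewrite -subr_gt0 (_ : 2 * (a - lam) - s = s + 2 * ((a - lam) - s)); last by ring.
  by rewrite ltr_wpDr ?sqrt2_gt0 // mulr_ge0 ?ler0n // subr_ge0.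
have flip := wcorr_flip (ltnW le_jn) (IH (ltnW le_jn)).
rewrite wcorrS // conj_wcorr_real ?(ltnW le_jn) // -subr_gt0.
rewrite (_ : 2 * (_ * _ - _) - _ = (s * wnorm j.+1 - 2 * wcorr j)
   + 2 * ((3/2 - lam) - s) * wnorm j.+1); last by ring.
by rewrite ltr_pwDl ?subr_gt0 // mulr_ge0 ?wnorm_ge0 // mulr_ge0 ?ler0n // subr_ge0 gap_le_diff.
Qed.

Lemma below_gap_false : False.
Proof.
have upper := wcorr_flip (leqnn n) (wcorr_lower (leqnn n)).
suff : s * wnorm n.+1 <= 2 * wcorr n by move/(lt_le_trans upper); rewrite ltxx.
rewrite -(ler_pM2l l_gt0) [l * (2 * _)]mulrCA -(conj_wcorr_real (leqnn n)) wcorr_last.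
rewrite (_ : 2 * (_ / 2) = (e - lam) * wnorm n.+1); last by field.
rewrite mulrA ler_wpM2r ?wnorm_ge0 //.
apply: (@le_trans _ _ s); first by rewrite mulrC ger_pMr ?sqrt2_gt0.
rewrite (le_trans gap_le_diff) // lerD2r (le_trans _ e_ge) //.
by rewrite -subr_ge0 (_ : 2 - 3/2 = 1/2 :> algC) ?divr_ge0 ?ler01 ?ler0n //; field.
Qed.

End BelowGap.

Lemma chain_gap : lam \is Num.real /\ 3/2 - s < lam.
Proof.
split; first exact: chain_real.
rewrite real_ltNge ?chain_real //; last by rewrite realB ?ger0_real ?divr_ge0 ?ler0n ?ltW ?sqrt2_gt0.
by apply/negP=> /below_gap_false.
Qed.

End ChainGap.

Section Deflation.

(* A matrix tri_mx a0 (-2 a0) (m+2): the difference sequence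
   u_k = X_k - 2 X_(k+1) of an eigenvector X for lam <> 0 is a chain. *)
Variables (a0 lam : algC) (m : nat) (X : nat -> algC).
Hypothesis first_row : a0 * X 0%N + (-2 * a0) * X 1%N = lam * X 0%N.
Hypothesis mid_rows : forall i, (1 <= i <= m)%N ->
  -(1/2) * X i.-1 + 3/2 * X i - X i.+1 = lam * X i.
Hypothesis last_row : - X m + 2 * X m.+1 = lam * X m.+1.
Hypothesis X_nz : exists2 i, (i < m.+2)%N & X i != 0.

Definition defl k : algC := X k - 2 * X k.+1.

(* If all differences vanished, X would be geometric and the last row
   would force lam X_(m+1) = 0, hence X = 0. *)
Lemma defl_nz : lam != 0 -> exists2 i, (i < m.+1)%N & defl i != 0.
Proof.
move=> lam_nz.
case: (pickP (fun i : 'I_m.+1 => defl i != 0)) => [j dj | d0]; first by exists j.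
have geom k : (k <= m)%N -> X k = 2 * X k.+1.
  move=> le_km; apply/eqP; rewrite -subr_eq0; apply: negbFE.
  exact: (d0 (Ordinal (le_km : (k < m.+1)%N))).
have Xlast : X m.+1 = 0.
  move: last_row; rewrite geom // (_ : - (2 * X m.+1) + 2 * X m.+1 = 0); last by ring.
  by move/esym/eqP; rewrite mulf_eq0 (negbTE lam_nz) => /eqP.
have Xzero d : (d <= m.+1)%N -> X (m.+1 - d)%N = 0.
  elim: d => [|d IH] le_d; first by rewrite subn0.
  have -> : (m.+1 - d.+1 = m - d)%N by lia.
  rewrite geom; last by lia.
  have -> : ((m - d).+1 = m.+1 - d)%N by lia.
  by rewrite IH ?mulr0 // ltnW.
have [i lt_i Xi] := X_nz; case/eqP: Xi.
have -> : i = (m.+1 - (m.+1 - i))%N by lia.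
by rewrite Xzero ?leq_subr.
Qed.

Lemma defl_first : (1 <= m)%N -> (a0 + 1) * defl 0%N - defl 1%N = lam * defl 0%N.
Proof.
move=> m_ge1; have row1 := mid_rows (i:=1) m_ge1.
rewrite /defl (_ : lam * (X 0%N - 2 * X 1%N) = lam * X 0%N - 2 * (lam * X 1%N)); last by ring.
by rewrite -first_row -row1 /=; field.
Qed.

Lemma defl_mid i : (1 <= i)%N -> (i < m)%N ->
  -(1/2) * defl i.-1 + 3/2 * defl i - defl i.+1 = lam * defl i.
Proof.
case: i => [//|i] _ lt_im.
have rowa := mid_rows (ltac:(lia) : (1 <= i.+1 <= m)%N).
have rowb := mid_rows (ltac:(lia) : (1 <= i.+2 <= m)%N).
rewrite /defl (_ : lam * (X i.+1 - 2 * X i.+2) = lam * X i.+1 - 2 * (lam * X i.+2)); last by ring.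
by rewrite -rowa -rowb /=; field.
Qed.

Lemma defl_last : (1 <= m)%N -> -(1/2) * defl m.-1 + 5/2 * defl m = lam * defl m.
Proof.
case: m mid_rows last_row => [//|m'] rows lastr _.
have rowm := rows m'.+1 (leqnn _).
rewrite /defl (_ : lam * (X m'.+1 - 2 * X m'.+2) = lam * X m'.+1 - 2 * (lam * X m'.+2)); last by ring.
by rewrite -rowm -lastr /=; field.
Qed.

(* For the 2x2 matrix the single difference is an eigenvector of (a0 + 2). *)
Lemma defl_single : lam != 0 -> m = 0%N -> lam = a0 + 2.
Proof.
move=> lam_nz m0; have [i lt_i di] := defl_nz lam_nz; move: di; rewrite (_ : i = 0%N); last by lia.
move: first_row last_row; rewrite m0 /defl => row0 row1 d0.
have : lam * (X 0%N - 2 * X 1%N) = (a0 + 2) * (X 0%N - 2 * X 1%N).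
  by rewrite mulrBr (mulrCA lam) -row0 -row1; ring.
by move/(mulIf d0).
Qed.

End Deflation.

Lemma tri_deflation_gap a0 b0 m lam : 1/2 <= a0 -> b0 = -2 * a0 ->
  eigenvalue (tri_mx a0 b0 m.+2) lam -> gapped lam.
Proof.
move=> a0_ge -> /tri_mx_eigen_rows [X [X_nz row0 rows lastr]].
have [-> | lam_nz] := eqVneq lam 0; first by split; [exact: real0 | left].
suff [lam_real gap] : lam \is Num.real /\ 3/2 - sqrtC 2 < lam by split; [| right].
case: m rows lastr X_nz => [|m] rows lastr X_nz.
  rewrite (defl_single row0 lastr X_nz lam_nz) //; split.
    by rewrite realD ?real0 ?ger0_real // (le_trans _ a0_ge) ?divr_ge0 ?ler0n.
  apply: (lt_le_trans (gap_lt1 _)); rewrite -lerBlDr (le_trans _ a0_ge) //.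
  by rewrite -subr_ge0 (_ : 1/2 - (1 - 2) = 3/2 :> algC) ?divr_ge0 ?ler0n //; field.
apply: (@chain_gap (a0 + 1) (1/2) (5/2) lam m (defl X)).
- by rewrite (_ : 3/2 = 1/2 + 1 :> algC) ?lerD2r //; field.
- by rewrite divr_gt0 ?ltr0n.
- by rewrite ler_pdivrMr ?mul1r ?ltr0n ?ler1n.
- by rewrite ler_pdivlMr ?ltr0n // -natrM ler_nat.
- exact: (defl_first row0 rows (ltn0Sn m)).
- by move=> i /andP[i_ge1 i_le]; exact: (defl_mid rows i_ge1).
- exact: (defl_last rows lastr (ltn0Sn m)).
- exact: (defl_nz lastr X_nz lam_nz).
Qed.

Lemma tri_mm_gap m lam : eigenvalue (tri_mx (3/2) (-1) m.+2) lam -> gapped lam.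
Proof.
move/tri_mx_eigen_rows=> [X [X_nz row0 rows lastr]].
suff [lam_real gap] : lam \is Num.real /\ 3/2 - sqrtC 2 < lam by split; [| right].
apply: (@chain_gap (3/2) 1 2 lam m X) => //.
- by rewrite -row0 mulN1r.
- by rewrite -lastr mulN1r.
Qed.

Theorem mainTheorem13 :
  (forall (r : nat), (2 <= r)%N -> forall l : algC,
      (eigenvalue (M_pp r) l \/ eigenvalue (M_pm r) l \/ eigenvalue (M_mm r) l) ->
      l \is Num.real /\ (l = 0 \/ 3/2 - sqrtC 2 < l)) /\
  (forall (r : nat) (l : algC), eigenvalue (M_mp r) l ->
      l \is Num.real /\ (l = 0 \/ 3/2 - sqrtC 2 < l)).
Proof.
split=> [r r_ge2 l eig_l | r l eig_l].
  have {eig_l} : eigenvalue (tri_mx (1/2) (-1) r) l \/ eigenvalue (tri_mx (3/2) (-1) r) l.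
    by case: eig_l => [|[]]; auto.
  case: r r_ge2 => [|[|m]] // _ [eig_l | eig_l]; last exact: tri_mm_gap eig_l.
  by apply: tri_deflation_gap eig_l => //; field.
case: r eig_l => [|m] eig_l.
  rewrite (eigenvalue_1x1 eig_l) mxE /=.
  by split; [exact: real1 | right; exact: gap_lt1].
apply: tri_deflation_gap eig_l; last by rewrite mulr1.
by rewrite ler_pdivrMr ?mul1r ?ltr0n ?ler1n.
Qed.
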